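(* Let $k$ be a field of characteristic $p>2$ ($p$ prime). Let $m\ge1$ and $\alpha_1,\ldots,\alpha_{2m}\in k$. Then $$w_m(x_1+\alpha_1,x_2+\alpha_2,\ldots,x_{2m}+\alpha_{2m})\equiv w_m\pmod{S^2+T^{(3)}}.$$
   Context: $X=\{x_i\mid i\ge0\}$ countably infinite; $k_1\langle X\rangle$ the free unitary associative $k$-algebra on $X$. $[a,b]=ab-ba$, $[a,b,c]=[[a,b],c]$. A $T$-space is a subspace invariant under all endomorphisms of $k_1\langle X\rangle$, a $T$-ideal is a $T$-space that is an ideal. $T^{(3)}$ is the $T$-ideal generated by $[x_1,x_2,x_3]$, $S^2$ the $T$-space generated by $[x_1,x_2]$. $\kappa(u,v)=[u,v]u^{p-1}v^{p-1}$, $w_m=\prod_{r=1}^m\kappa(x_{2r-1},x_{2r})$, and $w_m(u_1,\ldots,u_{2m})$ is the image of $w_m$ under $x_j\mapsto u_j$. *)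

(* The free unital associative algebra k_1<X> on the
   countable set X = {x_i | i >= 0} is the monoid algebra of the free monoid
   on nat:  {malg k[{fmonom nat}]}  (multinomials' monalg). *)
From HB Require Import structures.
From mathcomp Require Import all_boot all_order all_algebra.
From mathcomp.multinomials Require Export monalg.
Set Implicit Arguments.
Unset Strict Implicit.
Unset Printing Implicit Defensive.
Import Order.TTheory GRing.Theory Num.Theory.
Local Open Scope ring_scope.

Definition freealg (k : fieldType) := {malg k[{fmonom nat}]}.

Definition xvar (k : fieldType) (i : nat) : freealg k := << fmu i >>.

Definition comm (R : pzRingType) (a b : R) : R := a * b - b * a.
Definition comm3 (R : pzRingType) (a b c : R) : R := comm (comm a b) c.

Definition is_subspace (k : fieldType) (V : freealg k -> Prop) : Prop :=
  V 0 /\ (forall (a : k) (u v : freealg k), V u -> V v -> V (a *: u + v)).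

Definition is_Tspace (k : fieldType) (V : freealg k -> Prop) : Prop :=
  is_subspace V /\
  (forall (phi : {lrmorphism freealg k -> freealg k}) (f : freealg k),
      V f -> V (phi f)).

Definition is_Tideal (k : fieldType) (V : freealg k -> Prop) : Prop :=
  is_Tspace V /\ (forall a f b : freealg k, V f -> V (a * f * b)).

Definition Tspace_gen (k : fieldType) (G : freealg k -> Prop)
  (f : freealg k) : Prop :=
  forall V : freealg k -> Prop, is_Tspace V -> (forall g, G g -> V g) -> V f.

Definition Tideal_gen (k : fieldType) (G : freealg k -> Prop)
  (f : freealg k) : Prop :=
  forall V : freealg k -> Prop, is_Tideal V -> (forall g, G g -> V g) -> V f.

Definition S2 (k : fieldType) : freealg k -> Prop :=
  Tspace_gen (fun g => g = comm (xvar k 1) (xvar k 2)).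

Definition T3 (k : fieldType) : freealg k -> Prop :=
  Tideal_gen (fun g => g = comm3 (xvar k 1) (xvar k 2) (xvar k 3)).

Definition sum_sp (k : fieldType) (U V : freealg k -> Prop)
  (f : freealg k) : Prop :=
  exists u v, U u /\ V v /\ f = u + v.

Definition kappa (R : pzRingType) (p : nat) (u v : R) : R :=
  comm u v * u ^+ p.-1 * v ^+ p.-1.

Definition w (R : pzRingType) (p m : nat) (u : nat -> R) : R :=
  \prod_(1 <= r < m.+1) kappa p (u (2 * r).-1) (u (2 * r)).

(* Modulo T^(3) every commutator [u,v] is central, and when 2 is invertible
   also [x,y][x,z] lies in T^(3); hence [u,v][h,y] lies in T^(3) for every h
   in the subalgebra generated by u and v, so kappa(u,v) = [u,v] u^(p-1) v^(p-1)
   is central modulo T^(3).  Elements central modulo T^(3) preserve S^2 + T^(3)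
   under multiplication (as [a,b]z = [a,bz] - b[a,z]), so telescoping the two
   products reduces the claim to a single factor.  Expanding
   kappa(u+a,v+b) - kappa(u,v) binomially leaves terms [u,v]u^i Y with Y
   commuting with v, or [u,v] Y v^j with Y commuting with u, where i, j < p-1;
   modulo T^(3) the first is [u^(i+1) Y, v] / (i+1), because
   [u^(i+1), v] = (i+1)[u,v]u^i there, and symmetrically for the second. *)

From HB Require Import structures.
From mathcomp Require Import all_boot all_order all_algebra.
From mathcomp.multinomials Require Import monalg.
Import GRing.Theory.
Local Open Scope ring_scope.
Set Implicit Arguments.
Unset Strict Implicit.

Section FreeAlgScalars.
Variable k : fieldType.
Implicit Types (c : k) (g x y : freealg k).

Lemma malgC_commr c g : GRing.comm g c%:MP.
Proof.
rewrite /GRing.comm !malgM_def fgmulgU fgmulUg; apply: eq_bigr => m _.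
by rewrite mulrC mulm1 mul1m.
Qed.

Lemma alg_commr c g : GRing.comm g c%:A.
Proof. by rewrite -mul_malgC mulr1; apply: malgC_commr. Qed.

Lemma freealg_scalerAr c x y : x * (c *: y) = c *: (x * y).
Proof. by rewrite -!mul_malgC mulrA malgC_commr mulrA. Qed.

End FreeAlgScalars.

Section Substitution.
Variables (k : fieldType) (s : nat -> freealg k).

Definition subst_monom (m : {fmonom nat}) : freealg k := \prod_(i <- m : seq nat) s i.

Lemma subst_monom_is_mmorphism : mmorphism subst_monom.
Proof. by split=> [m1 m2|]; rewrite /subst_monom ?fmM ?big_cat // fm1 big_nil. Qed.

HB.instance Definition _ :=
  isMultiplicative.Build {fmonom nat} (freealg k) subst_monom
    subst_monom_is_mmorphism.

Definition subst (g : freealg k) : freealg k := mmap (@malgC _ k) subst_monom g.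

Lemma subst_is_multiplicative : multiplicative subst.
Proof.
by apply: commr_mmap_is_multiplicative => g m m'; apply/commr_sym/malgC_commr.
Qed.

Lemma subst_is_scalable : scalable subst.
Proof. by move=> c g; rewrite /subst mmapZ mul_malgC. Qed.

HB.instance Definition _ := GRing.isAdditive.Build (freealg k) (freealg k) subst
  (@mmap_is_additive _ _ _ (@malgC _ k) subst_monom).
HB.instance Definition _ :=
  GRing.isMultiplicative.Build (freealg k) (freealg k) subst subst_is_multiplicative.
HB.instance Definition _ :=
  GRing.isScalable.Build k (freealg k) (freealg k) *:%R subst subst_is_scalable.

Lemma subst_xvar i : subst (xvar k i) = s i.
Proof. by rewrite /subst mmapU /= /subst_monom fmU big_seq1 mpolyC1E mul1r. Qed.

End Substitution.

Section Subspace.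
Variables (k : fieldType) (V : freealg k -> Prop).
Hypothesis V_subspace : is_subspace V.

Lemma subspace0 : V 0.
Proof. by case: V_subspace. Qed.

Lemma subspaceD f g : V f -> V g -> V (f + g).
Proof. by case: V_subspace => _ VZD Vf Vg; rewrite -[f]scale1r; apply: VZD. Qed.

Lemma subspaceZ c f : V f -> V (c *: f).
Proof.
by case: V_subspace => V0 VZD Vf; rewrite -[_ *: f]addr0; apply: VZD.
Qed.

Lemma subspaceN f : V f -> V (- f).
Proof. by move=> Vf; rewrite -scaleN1r; apply: subspaceZ. Qed.

Lemma subspaceB f g : V f -> V g -> V (f - g).
Proof. by move=> Vf Vg; apply/subspaceD/subspaceN. Qed.

Lemma subspaceMn f n : V f -> V (f *+ n).
Proof. by move=> Vf; rewrite -scaler_nat; apply: subspaceZ. Qed.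

Lemma subspaceB_trans f g h : V (f - g) -> V (g - h) -> V (f - h).
Proof. by move=> Vfg Vgh; rewrite -[f](subrK g) -addrA; apply: subspaceD. Qed.

Lemma subspace_sum I (r : seq I) (P : pred I) (F : I -> freealg k) :
  (forall i, P i -> V (F i)) -> V (\sum_(i <- r | P i) F i).
Proof. by apply: big_ind; [apply: subspace0 | apply: subspaceD]. Qed.

End Subspace.

Lemma sum_sp_subspace (k : fieldType) (U V : freealg k -> Prop) :
  is_subspace U -> is_subspace V -> is_subspace (sum_sp U V).
Proof.
move=> Usub Vsub; split.
  by exists 0, 0; split; [exact: subspace0 | split; [exact: subspace0 | rewrite addr0]].
move=> c _ _ [u1 [v1 [Uu1 [Vv1 ->]]]] [u2 [v2 [Uu2 [Vv2 ->]]]].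
exists (c *: u1 + u2), (c *: v1 + v2); split; last split.
- by case: Usub => _; apply.
- by case: Vsub => _; apply.
- by rewrite scalerDr addrACA.
Qed.

Lemma Tspace_gen_subspace (k : fieldType) (G : freealg k -> Prop) :
  is_subspace (Tspace_gen G).
Proof.
split=> [V [[V0 _] _] _ // | c f g Gf Gg V VT VG].
by case: (VT) => [[_ VZD] _]; apply: VZD; [apply: Gf | apply: Gg].
Qed.

Lemma Tideal_gen_Tideal (k : fieldType) (G : freealg k -> Prop) :
  is_Tideal (Tideal_gen G).
Proof.
split; first split.
- split=> [V [[[V0 _] _] _] _ // | c f g Gf Gg V VT VG].
  by case: (VT) => [[[_ VZD] _] _]; apply: VZD; [apply: Gf | apply: Gg].
- by move=> phi f Gf V VT VG; case: (VT) => [[_ Vphi] _]; apply: Vphi; apply: Gf.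
- by move=> a f b Gf V VT VG; case: (VT) => _ VM; apply: VM; apply: Gf.
Qed.

Section CommutatorIdentities.
Variable R : pzRingType.
Implicit Types a b c x y z : R.

Lemma commDl a b c : comm (a + b) c = comm a c + comm b c.
Proof. by rewrite /comm mulrDl mulrDr opprD addrACA. Qed.

Lemma commDr a b c : comm a (b + c) = comm a b + comm a c.
Proof. by rewrite /comm mulrDl mulrDr opprD addrACA. Qed.

Lemma commMl a b c : comm (a * b) c = a * comm b c + comm a c * b.
Proof. by rewrite /comm mulrBr mulrBl !mulrA addrA subrK. Qed.

Lemma commMr a b c : comm a (b * c) = comm a b * c + b * comm a c.
Proof. by rewrite /comm mulrBr mulrBl !mulrA addrA subrK. Qed.

Lemma commMl_subl a b c : comm (a * b) c - a * comm b c = comm a c * b.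
Proof. by rewrite commMl addrC addKr. Qed.

Lemma commMr_subl a b c : comm a (b * c) - comm a b * c = b * comm a c.
Proof. by rewrite commMr addrC addKr. Qed.

Lemma subr_mul2 x X y Y : X * Y - x * y = (X - x) * Y + x * (Y - y).
Proof. by rewrite mulrBl mulrBr addrA subrK. Qed.

Lemma subr_mul3 c x X y Y : c * X * Y - c * x * y = c * (X - x) * Y + c * x * (Y - y).
Proof. by rewrite subr_mul2 -mulrBr. Qed.

Lemma oppr_comm a b : - comm a b = comm b a.
Proof. by rewrite /comm opprB. Qed.

Lemma rmorph_comm (S : pzRingType) (phi : {rmorphism R -> S}) a b :
  phi (comm a b) = comm (phi a) (phi b).
Proof. by rewrite rmorphB !rmorphM. Qed.

Lemma mulr_commMl c a b x :
  c * comm (a * b) x = a * (c * comm b x) + comm c a * comm b x + c * comm a x * b.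
Proof.
rewrite commMl mulrDr !mulrA; congr (_ + _).
by rewrite -mulrDl; congr (_ * _); rewrite /comm addrC subrK.
Qed.

Lemma comm_eq0 a b : GRing.comm a b -> comm a b = 0.
Proof. by rewrite /comm => ->; rewrite subrr. Qed.

Lemma comm_mul_comm_mul2n x y z :
  comm x y * comm x z *+ 2 =
  comm3 x y x * z + y * comm3 x z x - comm3 x (y * z) x.
Proof.
rewrite /comm3 commMr (commDl (comm x y * z)) (commMl (comm x y)) (commMl y).
rewrite -(oppr_comm x z) -(oppr_comm x y) mulrN mulNr.
move: (comm x y * comm x z) (comm (comm x y) x * z) (y * comm (comm x z) x).
move=> P a b; rewrite opprD opprB opprD opprK mulr2n.
by rewrite addrACA (addrC a) (addrC b) !subrK.
Qed.

Lemma comm_exp_id x y n :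
  comm (x ^+ n.+2) y - comm x y * x ^+ n.+1 *+ n.+2 =
  comm (x ^+ n.+1) (comm x y)
  + (comm (x ^+ n.+1) y - comm x y * x ^+ n *+ n.+1) * x.
Proof.
rewrite [x ^+ n.+2]exprSr commMl mulrBl mulrnAl -mulrA -exprSr.
move: (comm x y) (x ^+ n.+1) => c X.
rewrite {2}/comm mulrSr opprD !addrA.
by rewrite [X * c - c * X + _]addrAC addrAC.
Qed.

End CommutatorIdentities.

Lemma natr_pchar_neq0 (R : nzRingType) p n :
  p \in [pchar R] -> (0 < n < p)%N -> n%:R != 0 :> R.
Proof.
move=> pcharRp /andP[n_gt0 n_lt_p]; rewrite -(dvdn_pcharf pcharRp).
by apply/negP => /(dvdn_leq n_gt0); rewrite leqNgt n_lt_p.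
Qed.

Section ModuloT3.
Variable k : fieldType.
Local Notation A := (freealg k).
Implicit Types a b c f g h u v x y z : A.

Lemma T3_Tideal : is_Tideal (@T3 k).
Proof. exact: Tideal_gen_Tideal. Qed.

Lemma T3_subspace : is_subspace (@T3 k).
Proof. by case: T3_Tideal => [[]]. Qed.

Lemma T3_mul a f b : T3 f -> T3 (a * f * b).
Proof. by case: T3_Tideal => _; apply. Qed.

Lemma T3_mull a f : T3 f -> T3 (a * f).
Proof. by move=> Tf; rewrite -[a * f]mulr1; exact: T3_mul Tf. Qed.

Lemma T3_mulr f b : T3 f -> T3 (f * b).
Proof. by move=> Tf; rewrite -[f]mul1r; exact: T3_mul Tf. Qed.

Definition subst3 a b c (j : nat) : A :=
  if j == 1%N then a else if j == 2%N then b else c.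

Lemma T3_comm3 a b c : T3 (comm3 a b c).
Proof.
move=> V [[_ Vphi] _] Vgen; have := Vphi (subst (subst3 a b c)) _ (Vgen _ erefl).
by rewrite /comm3 !rmorph_comm /= !subst_xvar.
Qed.

Lemma S2_comm a b : S2 (comm a b).
Proof.
move=> V [_ Vphi] Vgen; have := Vphi (subst (subst3 a b b)) _ (Vgen _ erefl).
by rewrite rmorph_comm /= !subst_xvar.
Qed.

Lemma S2_subspace : is_subspace (@S2 k).
Proof. exact: Tspace_gen_subspace. Qed.

(* The elements all of whose endomorphic images lie in P form a T-space. *)
Lemma S2_comm_subspace (P : A -> Prop) :
  is_subspace P -> (forall a b, P (comm a b)) -> forall f, S2 f -> P f.
Proof.
move=> Psub Pcomm f S2f.
pose V g := forall phi : {lrmorphism A -> A}, P (phi g).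
suff /(_ idfun) : V f by [].
apply: (S2f V) => [|_ -> phi]; last by rewrite rmorph_comm.
split; last by move=> psi g Pg phi; exact: (Pg (phi \o psi)).
split=> [phi|c g h Pg Ph phi]; first by rewrite raddf0; exact: subspace0.
rewrite linearP; case: Psub => _; apply; [exact: Pg | exact: Ph].
Qed.

Definition S2T3 : A -> Prop := sum_sp (@S2 k) (@T3 k).

Lemma S2T3_subspace : is_subspace S2T3.
Proof. exact: sum_sp_subspace S2_subspace T3_subspace. Qed.

Lemma S2T3_T3 f : T3 f -> S2T3 f.
Proof. by exists 0, f; rewrite add0r; split; first exact: subspace0 S2_subspace. Qed.

Lemma S2T3_comm a b : S2T3 (comm a b).
Proof.
exists (comm a b), 0; rewrite addr0; split; first exact: S2_comm.
by split; first exact: subspace0 T3_subspace.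
Qed.

Lemma S2T3_congr_T3 f g : S2T3 g -> T3 (g - f) -> S2T3 f.
Proof.
move=> Wg Tgf; rewrite -[f](subKr g).
by apply: subspaceB Wg (S2T3_T3 Tgf); exact: S2T3_subspace.
Qed.

Lemma T3_comm_mul_comm x y z : 2%:R != 0 :> k -> T3 (comm x y * comm x z).
Proof.
move=> two_neq0; rewrite -[_ * _]scale1r -(mulVf two_neq0) -scalerA scaler_nat.
apply: (subspaceZ T3_subspace); rewrite comm_mul_comm_mul2n.
apply: (subspaceB T3_subspace); last exact: T3_comm3.
by apply: (subspaceD T3_subspace); [apply: T3_mulr | apply: T3_mull]; exact: T3_comm3.
Qed.

Lemma T3_commX x y n : T3 (comm (x ^+ n.+1) y - comm x y * x ^+ n *+ n.+1).
Proof.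
elim: n => [|n IHn]; first by rewrite expr1 mulr1 subrr; exact: subspace0 T3_subspace.
rewrite comm_exp_id; apply: (subspaceD T3_subspace); last exact: T3_mulr.
by rewrite -oppr_comm; apply: (subspaceN T3_subspace); exact: T3_comm3.
Qed.

Lemma T3_commXr x y n : T3 (comm y (x ^+ n.+1) - comm y x * x ^+ n *+ n.+1).
Proof.
rewrite -oppr_comm -(oppr_comm x) mulNr mulNrn -opprD.
by apply: (subspaceN T3_subspace); exact: T3_commX.
Qed.

Definition centralT3 f := forall y, T3 (comm f y).

Definition annT3 c h := forall y, T3 (c * comm h y).

Lemma centralT3_comm u v : centralT3 (comm u v).
Proof. by move=> y; exact: T3_comm3. Qed.

Lemma centralT3_mul f g : centralT3 f -> centralT3 g -> centralT3 (f * g).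
Proof.
move=> Zf Zg y; rewrite commMl.
by apply: (subspaceD T3_subspace); [apply: T3_mull | apply: T3_mulr].
Qed.

Lemma centralT3_prod I (r : seq I) (F : I -> A) :
  (forall i, centralT3 (F i)) -> centralT3 (\prod_(i <- r) F i).
Proof.
move=> ZF; apply: big_ind => [y | f g |//]; last exact: centralT3_mul.
by rewrite comm_eq0; [exact: subspace0 T3_subspace | exact/commr_sym/commr1].
Qed.

Lemma annT3_mul c f g :
  centralT3 c -> annT3 c f -> annT3 c g -> annT3 c (f * g).
Proof.
move=> Zc cf cg y; rewrite mulr_commMl.
apply: (subspaceD T3_subspace); last exact: T3_mulr.
by apply: (subspaceD T3_subspace); [apply: T3_mull | apply: T3_mulr].
Qed.

Lemma annT3X c f n : centralT3 c -> annT3 c f -> annT3 c (f ^+ n).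
Proof.
move=> Zc cf; elim: n => [|n IHn]; last by rewrite exprS; exact: annT3_mul.
move=> y; rewrite expr0 comm_eq0 ?mulr0; first exact: subspace0 T3_subspace.
exact/commr_sym/commr1.
Qed.

Lemma centralT3_mul_ann c h : centralT3 c -> annT3 c h -> centralT3 (c * h).
Proof.
by move=> Zc ch y; rewrite commMl; apply: (subspaceD T3_subspace); last exact: T3_mulr.
Qed.

Lemma centralT3_kappa n u v : 2%:R != 0 :> k -> centralT3 (kappa n u v).
Proof.
move=> two_neq0; rewrite /kappa -mulrA.
apply: centralT3_mul_ann (centralT3_comm u v) _.
apply: annT3_mul (centralT3_comm u v) _ _; apply: annT3X (centralT3_comm u v) _.
  by move=> y; exact: T3_comm_mul_comm.
move=> y; rewrite -oppr_comm mulNr; apply: (subspaceN T3_subspace).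
exact: T3_comm_mul_comm.
Qed.

Lemma S2T3_mulr_central f z : centralT3 z -> S2T3 f -> S2T3 (f * z).
Proof.
move=> Zz [s [t [S2s [T3t ->]]]]; rewrite mulrDl.
apply: (subspaceD S2T3_subspace); last by apply: S2T3_T3; apply: T3_mulr.
move: s S2s; apply: S2_comm_subspace => [|a b].
  split=> [|c u v Wu Wv]; first by rewrite mul0r; exact: subspace0 S2T3_subspace.
  by rewrite mulrDl -scalerAl; case: S2T3_subspace => _ WZD; exact: WZD Wu Wv.
apply: S2T3_congr_T3 (S2T3_comm a (b * z)) _.
rewrite commMr_subl; apply: T3_mull.
by rewrite -oppr_comm; apply: (subspaceN T3_subspace).
Qed.

Lemma S2T3_mull_central f z : centralT3 z -> S2T3 f -> S2T3 (z * f).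
Proof.
move=> Zz [s [t [S2s [T3t ->]]]]; rewrite mulrDr.
apply: (subspaceD S2T3_subspace); last by apply: S2T3_T3; apply: T3_mull.
move: s S2s; apply: S2_comm_subspace => [|a b].
  split=> [|c u v Wu Wv]; first by rewrite mulr0; exact: subspace0 S2T3_subspace.
  by rewrite mulrDr freealg_scalerAr; case: S2T3_subspace => _ WZD; exact: WZD Wu Wv.
apply: S2T3_congr_T3 (S2T3_comm (z * a) b) _.
by rewrite commMl_subl; apply: T3_mulr.
Qed.

Lemma S2T3_mulnK f n : n%:R != 0 :> k -> S2T3 (f *+ n) -> S2T3 f.
Proof.
move=> n_neq0 Wfn; rewrite -[f]scale1r -(mulVf n_neq0) -scalerA scaler_nat.
by apply: (subspaceZ S2T3_subspace).
Qed.

(* (n+1) [u,v] u^n y = [u^(n+1) y, v] modulo T^(3) *)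
Lemma S2T3_comm_expl u v y n :
  GRing.comm y v -> n.+1%:R != 0 :> k -> S2T3 (comm u v * u ^+ n * y).
Proof.
move=> yv n_neq0; apply: S2T3_mulnK n_neq0 _.
apply: S2T3_congr_T3 (S2T3_comm (u ^+ n.+1 * y) v) _.
rewrite commMl (comm_eq0 yv) mulr0 add0r -mulrnAl -mulrBl.
by apply: T3_mulr; exact: T3_commX.
Qed.

Lemma S2T3_comm_expr u v y n :
  GRing.comm u y -> n.+1%:R != 0 :> k -> S2T3 (comm u v * y * v ^+ n).
Proof.
move=> uy n_neq0; apply: S2T3_mulnK n_neq0 _.
apply: S2T3_congr_T3 (S2T3_comm u (y * v ^+ n.+1)) _.
rewrite commMr (comm_eq0 uy) mul0r add0r.
apply: (subspaceB_trans T3_subspace (g := y * comm u v * v ^+ n *+ n.+1)).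
  by rewrite -mulrA -mulrnAr -mulrBr; apply: T3_mull; exact: T3_commXr.
rewrite -mulrnBl -mulrBl; apply: (subspaceMn T3_subspace); apply: T3_mulr.
by rewrite -/(comm y _) -oppr_comm; apply: (subspaceN T3_subspace); exact: T3_comm3.
Qed.

Lemma comm_add_alg u v (a b : k) : comm (u + a%:A) (v + b%:A) = comm u v.
Proof.
rewrite (commDl u) !commDr (comm_eq0 (alg_commr b u)) (comm_eq0 (alg_commr b a%:A)).
by rewrite (comm_eq0 (commr_sym (alg_commr a v))) !addr0.
Qed.

Lemma exprD_alg_sub u (a : k) n :
  (u + a%:A) ^+ n - u ^+ n = \sum_(i < n) (a ^+ (n - i) *+ 'C(n, i)) *: u ^+ i.
Proof.
rewrite (addrC u) exprDn_comm; last exact: commr_sym (alg_commr a u).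
rewrite big_ord_recr /= subnn expr0 mul1r binn mulr1n addrK.
apply: eq_bigr => i _; rewrite -scalerMnl -[in RHS]mulr_algl.
by rewrite -(rmorphXn (in_alg A)).
Qed.

Lemma S2T3_kappa_shift p u v (a b : k) :
  p \in [pchar k] -> S2T3 (kappa p (u + a%:A) (v + b%:A) - kappa p u v).
Proof.
move=> pcharp; have succ_neq0 i : (i < p.-1)%N -> i.+1%:R != 0 :> k.
  by move=> ilt; apply: natr_pchar_neq0 pcharp _; rewrite ltn_predRL in ilt.
rewrite /kappa comm_add_alg subr_mul3; apply: (subspaceD S2T3_subspace).
  rewrite exprD_alg_sub mulr_sumr mulr_suml.
  apply: (subspace_sum S2T3_subspace) => i _.
  rewrite freealg_scalerAr -scalerAl; apply: (subspaceZ S2T3_subspace).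
  apply: S2T3_comm_expl (succ_neq0 _ (ltn_ord i)).
  exact: commr_sym (commrX _ (commrD (commr_refl v) (alg_commr b v))).
rewrite exprD_alg_sub mulr_sumr; apply: (subspace_sum S2T3_subspace) => i _.
rewrite freealg_scalerAr; apply: (subspaceZ S2T3_subspace).
exact: S2T3_comm_expr (commrX _ (commr_refl u)) (succ_neq0 _ (ltn_ord i)).
Qed.

Lemma S2T3_prodB I (r : seq I) (F G : I -> A) :
  (forall i, centralT3 (F i)) -> (forall i, centralT3 (G i)) ->
  (forall i, S2T3 (F i - G i)) ->
  S2T3 (\prod_(i <- r) F i - \prod_(i <- r) G i).
Proof.
move=> ZF ZG WFG; elim: r => [|i r IHr].
  by rewrite !big_nil subrr; exact: subspace0 S2T3_subspace.
rewrite !big_cons subr_mul2; apply: (subspaceD S2T3_subspace).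
  exact: S2T3_mulr_central (centralT3_prod _ ZF) (WFG i).
exact: S2T3_mull_central (ZG i) IHr.
Qed.

End ModuloT3.

Theorem lemma3p1 (k : fieldType) (p : nat) (hp : p \in [pchar k])
  (hp2 : (2 < p)%N) (m : nat) (hm : (1 <= m)%N) (alpha : nat -> k) :
  sum_sp (@S2 k) (@T3 k)
    (w p m (fun j => xvar k j + (alpha j)%:A) - w p m (xvar k)).
Proof.
have two_neq0 : 2%:R != 0 :> k by apply: natr_pchar_neq0 hp _.
apply: S2T3_prodB => r; last exact: S2T3_kappa_shift.
- exact: centralT3_kappa.
- exact: centralT3_kappa.
Qed.
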